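(* Let $(V,g,J)$ be a pseudo-hermitian vector space, $A:V\to V$ a hermitian endomorphism, $p$ a polynomial with real coefficients and $B=p(A)$. Suppose a linear operator $R:\mathfrak{u}(g,J)\to\mathfrak{u}(g,J)$ satisfies $[R(X),A]=[X,B]$ for all $X\in\mathfrak{u}(g,J)$. Then: (1) for any real eigenvalues $\lambda_i\neq\lambda_j$ of $A$, the number $\frac{p(\lambda_i)-p(\lambda_j)}{\lambda_i-\lambda_j}$ is an eigenvalue of $R$; (2) if $A$ has a non-trivial Jordan block with real eigenvalue $\lambda_i$, then $p'(\lambda_i)$ is an eigenvalue of $R$.
   Context: A pseudo-hermitian vector space $(V,g,J)$ is a real vector space with a complex structure $J$ and a non-degenerate inner product $g$ (any signature) with $g(Ju,Jv)=g(u,v)$. An endomorphism is hermitian if it is $g$-selfadjoint and commutes with $J$. $\mathfrak{u}(g,J)=\{X\in\mathfrak{gl}(V):[X,J]=0,\ g(Xu,v)=-g(u,Xv)\}$. *)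

From HB Require Import structures.
From mathcomp Require Import all_boot all_order all_algebra.
Set Implicit Arguments. Unset Strict Implicit. Unset Printing Implicit Defensive.
Import Order.TTheory GRing.Theory Num.Theory.
Local Open Scope ring_scope.

(* Vectors of V are column vectors 'cV[R]_m; endomorphisms are m x m matrices
   acting on the left; the inner product is g(u,v) = u^T *m G *m v. *)

Definition commx (R : pzRingType) (m : nat) (X Y : 'M[R]_m) : 'M[R]_m :=
  X *m Y - Y *m X.

Definition pseudo_hermitian (R : realFieldType) (m : nat) (G J : 'M[R]_m) : Prop :=
  [/\ J *m J = - 1%:M, G^T = G, G \in unitmx & J^T *m G *m J = G].

Definition hermitian_endo (R : realFieldType) (m : nat) (G J A : 'M[R]_m) : Prop :=
  A^T *m G = G *m A /\ A *m J = J *m A.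

Definition in_u (R : realFieldType) (m : nat) (G J X : 'M[R]_m) : Prop :=
  X *m J = J *m X /\ X^T *m G = - (G *m X).

Definition u_eigenvalue (R : realFieldType) (m : nat) (G J : 'M[R]_m)
  (R0 : 'M[R]_m -> 'M[R]_m) (mu : R) : Prop :=
  exists X : 'M[R]_m, [/\ in_u G J X, X != 0 & R0 X = mu *: X].

(* A has a non-trivial Jordan block (size >= 2) for the eigenvalue lam:
   ker (A - lam)^2 is strictly bigger than ker (A - lam). *)
Definition nontrivial_jordan_block (R : realFieldType) (m : nat)
  (A : 'M[R]_m) (lam : R) : Prop :=
  exists v : 'cV[R]_m,
    (A - lam%:M) *m ((A - lam%:M) *m v) = 0 /\ (A - lam%:M) *m v != 0.

From HB Require Import structures.
From mathcomp Require Import all_boot all_order all_algebra.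
Set Implicit Arguments. Unset Strict Implicit. Unset Printing Implicit Defensive.
Import Order.TTheory GRing.Theory Num.Theory.
Local Open Scope ring_scope.

(* The centralizer C of A in u(g,J) is R-stable: [R X, A] = [X, p(A)] vanishes
   for X in C.  Hence if X in u(g,J) satisfies [X, p(A)] = mu [X, A] and
   [X, A] != 0, then R X - mu X lies in C, and the Fredholm alternative for
   R - mu on C produces an eigenvector for mu: either one inside C, or X - w
   where (R - mu) w = R X - mu X.  Such an X is the hermitian wedge
   a/\b + Ja/\Jb of two eigenvectors of A for distinct real eigenvalues li, lj,
   which gives mu = (p(li) - p(lj)) / (li - lj); or of the vectors
   u = (A - l) v and v of a Jordan chain, which gives mu = p'(l). *)

Section StableOperator.

Variables (K : fieldType) (vT : vectType K).

Lemma linfun_linearE (rT : vectType K) (f : vT -> rT) :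
  linear f -> linfun f =1 f.
Proof. by move=> fL; apply: (lfunE (HB.pack f (GRing.isLinear.Build _ _ _ _ f fL))). Qed.

Lemma limg_stable_injective (f : 'End(vT)) (C : {vspace vT}) :
  (f @: C <= C)%VS -> (C :&: lker f)%VS = 0%VS -> (f @: C)%VS = C.
Proof.
by move=> fCC /limg_dim_eq dimE; apply/eqP; rewrite eqEdim fCC dimE leqnn.
Qed.

Variables (C : {vspace vT}) (T : vT -> vT).
Hypotheses (T_stable : {in C, forall x, T x \in C})
  (T_linear : forall a, {in C &, forall x y, T (a *: x + y) = a *: T x + T y}).

Lemma stable_eigenvector_or_onto (mu : K) z : z \in C ->
  (exists2 w, w \in C & w != 0 /\ T w = mu *: w) \/
  (exists2 w, w \in C & T w - mu *: w = z).
Proof.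
move=> Cz.
pose f x := T (projv C x) - mu *: projv C x.
have fL : linear f.
  move=> a x y; rewrite /f linearP T_linear ?memv_proj // scalerDr scalerBr.
  by rewrite scalerA mulrC -scalerA opprD addrACA.
have fE x : x \in C -> linfun f x = T x - mu *: x.
  by move=> Cx; rewrite linfun_linearE // /f projv_id.
have [kerC0|kerC] := eqVneq (C :&: lker (linfun f))%VS 0%VS; [right | left].
  have fCC : (linfun f @: C <= C)%VS.
    by apply/subvP => _ /memv_imgP [x Cx ->]; rewrite fE // memvB ?memvZ ?T_stable.
  have : z \in (linfun f @: C)%VS by rewrite limg_stable_injective.
  by case/memv_imgP => w Cw ->; exists w; rewrite ?fE.
have := memv_pick (C :&: lker (linfun f))%VS; rewrite memv_cap memv_ker => /andP[Cw].
rewrite fE // subr_eq0 => /eqP Tw.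
by exists (vpick (C :&: lker (linfun f))%VS); rewrite ?vpick0.
Qed.

End StableOperator.

Section Commutator.

Variables (R : comNzRingType) (n : nat).
Implicit Types X Y M : 'M[R]_n.

Lemma commxB X Y M : commx (X - Y) M = commx X M - commx Y M.
Proof.
by rewrite /commx mulmxBl mulmxBr !opprB addrACA [RHS]addrACA [- _ - _]addrC.
Qed.

Lemma commxZ (c : R) X M : commx (c *: X) M = c *: commx X M.
Proof. by rewrite /commx -scalemxAl -scalemxAr scalerBr. Qed.

End Commutator.

Section HermitianRankOne.

Variables (R : comNzRingType) (n : nat) (G J : 'M[R]_n).
Implicit Types (a b u v : 'cV[R]_n) (M : 'M[R]_n).

(* [rank_one a b] is the operator [x |-> g(b, x) a], and [hwedge a b] is the
   element a/\b + Ja/\Jb of u(g,J). *)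
Definition rank_one (a b : 'cV[R]_n) : 'M[R]_n := a *m (b^T *m G).

Definition hrank a b : 'M[R]_n := rank_one a b + rank_one (J *m a) (J *m b).
Definition hwedge a b : 'M[R]_n := hrank a b - hrank b a.
Definition hsym a b : 'M[R]_n := hrank a b + hrank b a.

Lemma rank_oneZl c a b : rank_one (c *: a) b = c *: rank_one a b.
Proof. by rewrite /rank_one scalemxAl. Qed.

Lemma rank_oneZr c a b : rank_one a (c *: b) = c *: rank_one a b.
Proof. by rewrite /rank_one linearZ /= -scalemxAl -scalemxAr. Qed.

Lemma rank_oneDl a1 a2 b : rank_one (a1 + a2) b = rank_one a1 b + rank_one a2 b.
Proof. by rewrite /rank_one mulmxDl. Qed.

Lemma rank_oneDr a b1 b2 : rank_one a (b1 + b2) = rank_one a b1 + rank_one a b2.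
Proof. by rewrite /rank_one linearD /= mulmxDl mulmxDr. Qed.

Lemma rank_oneNl a b : rank_one (- a) b = - rank_one a b.
Proof. by rewrite /rank_one mulNmx. Qed.

Lemma rank_oneNr a b : rank_one a (- b) = - rank_one a b.
Proof. by rewrite /rank_one linearN /= mulNmx mulmxN. Qed.

Lemma rank_one0l b : rank_one 0 b = 0.
Proof. by rewrite /rank_one mul0mx. Qed.

Lemma rank_one0r a : rank_one a 0 = 0.
Proof. by rewrite /rank_one trmx0 mul0mx mulmx0. Qed.

Lemma mulmx_rank_one M a b : M *m rank_one a b = rank_one (M *m a) b.
Proof. by rewrite /rank_one mulmxA. Qed.

Lemma rank_one_mulmx M a b :
  M^T *m G = G *m M -> rank_one a b *m M = rank_one a (M *m b).
Proof. by move=> MG; rewrite /rank_one -!mulmxA -MG trmx_mul !mulmxA. Qed.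

Lemma tr_rank_one a b : G^T = G -> (rank_one a b)^T *m G = G *m rank_one b a.
Proof. by move=> Gs; rewrite /rank_one !trmx_mul trmxK Gs !mulmxA. Qed.

Lemma hrankZl c a b : hrank (c *: a) b = c *: hrank a b.
Proof. by rewrite /hrank -scalemxAr !rank_oneZl scalerDr. Qed.

Lemma hrankZr c a b : hrank a (c *: b) = c *: hrank a b.
Proof. by rewrite /hrank -scalemxAr !rank_oneZr scalerDr. Qed.

Lemma hrankDl a1 a2 b : hrank (a1 + a2) b = hrank a1 b + hrank a2 b.
Proof. by rewrite /hrank mulmxDr !rank_oneDl addrACA. Qed.

Lemma hrankDr a b1 b2 : hrank a (b1 + b2) = hrank a b1 + hrank a b2.
Proof. by rewrite /hrank mulmxDr !rank_oneDr addrACA. Qed.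

Lemma hsymZl c a b : hsym (c *: a) b = c *: hsym a b.
Proof. by rewrite /hsym hrankZl hrankZr [RHS]scalerDr. Qed.

Lemma hsymZr c a b : hsym a (c *: b) = c *: hsym a b.
Proof. by rewrite /hsym hrankZl hrankZr [RHS]scalerDr. Qed.

Lemma hsymDr a b1 b2 : hsym a (b1 + b2) = hsym a b1 + hsym a b2.
Proof. by rewrite /hsym hrankDl hrankDr addrACA. Qed.

Lemma hrank0l b : hrank 0 b = 0.
Proof. by rewrite /hrank mulmx0 !rank_one0l addr0. Qed.

Lemma mulmx_hrank M a b :
  M *m J = J *m M -> M *m hrank a b = hrank (M *m a) b.
Proof. by move=> MJ; rewrite /hrank mulmxDr !mulmx_rank_one !mulmxA MJ. Qed.

Lemma hrank_mulmx M a b : M^T *m G = G *m M -> M *m J = J *m M ->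
  hrank a b *m M = hrank a (M *m b).
Proof.
by move=> MG MJ; rewrite /hrank mulmxDl !rank_one_mulmx // !mulmxA MJ.
Qed.

Lemma commx_hrank M a b : M^T *m G = G *m M -> M *m J = J *m M ->
  commx (hrank a b) M = hrank a (M *m b) - hrank (M *m a) b.
Proof. by move=> MG MJ; rewrite /commx hrank_mulmx // mulmx_hrank. Qed.

Lemma commx_hwedge M a b : M^T *m G = G *m M -> M *m J = J *m M ->
  commx (hwedge a b) M = hsym a (M *m b) - hsym (M *m a) b.
Proof.
by move=> MG MJ; rewrite commxB !commx_hrank // opprB addrACA -opprD.
Qed.

Lemma mulmx_hsym M a b :
  M *m J = J *m M -> M *m hsym a b = hrank (M *m a) b + hrank (M *m b) a.
Proof. by move=> MJ; rewrite /hsym mulmxDr !mulmx_hrank. Qed.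

Lemma commx_hwedge_eigen M a b al be :
  M^T *m G = G *m M -> M *m J = J *m M ->
  M *m a = al *: a -> M *m b = be *: b ->
  commx (hwedge a b) M = (be - al) *: hsym a b.
Proof.
by move=> MG MJ Ma Mb; rewrite commx_hwedge // Ma Mb hsymZl hsymZr scalerBl.
Qed.

Lemma commx_hwedge_jordan M u v al be :
  M^T *m G = G *m M -> M *m J = J *m M ->
  M *m u = al *: u -> M *m v = al *: v + be *: u ->
  commx (hwedge u v) M = be *: hsym u u.
Proof.
move=> MG MJ Mu Mv; rewrite commx_hwedge // Mu Mv hsymDr hsymZl !hsymZr.
by rewrite addrAC subrr add0r.
Qed.

Hypotheses (JJ : J *m J = - 1%:M) (Gs : G^T = G) (JGJ : J^T *m G *m J = G).

Lemma mulmxJJ (x : 'cV[R]_n) : J *m (J *m x) = - x.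
Proof. by rewrite mulmxA JJ mulNmx mul1mx. Qed.

Lemma rank_one_mulJ a b : rank_one a b *m J = - rank_one a (J *m b).
Proof.
have GJ : G *m J = - (J^T *m G) by rewrite -{1}JGJ -mulmxA JJ mulmxN mulmx1.
by rewrite /rank_one -!mulmxA GJ trmx_mul !mulmxN !mulmxA.
Qed.

Lemma hrank_commJ a b : hrank a b *m J = J *m hrank a b.
Proof.
rewrite /hrank mulmxDl mulmxDr !rank_one_mulJ !mulmx_rank_one !mulmxJJ.
by rewrite rank_oneNl rank_oneNr opprK addrC.
Qed.

Lemma hwedge_commJ a b : hwedge a b *m J = J *m hwedge a b.
Proof. by rewrite /hwedge mulmxBl mulmxBr !hrank_commJ. Qed.

Lemma tr_hrank a b : (hrank a b)^T *m G = G *m hrank b a.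
Proof. by rewrite /hrank linearD mulmxDl !tr_rank_one // mulmxDr. Qed.

Lemma tr_hwedge a b : (hwedge a b)^T *m G = - (G *m hwedge a b).
Proof. by rewrite /hwedge linearB mulmxBl !tr_hrank mulmxBr opprB. Qed.

End HermitianRankOne.

Lemma hwedge_in_u (R : realFieldType) n (G J : 'M[R]_n) a b :
  pseudo_hermitian G J -> in_u G J (hwedge G J a b).
Proof. by case=> JJ Gs _ JGJ; split; [apply: hwedge_commJ | apply: tr_hwedge]. Qed.

Section RealComplexStructure.

Variables (R : realFieldType) (n : nat) (G J : 'M[R]_n).
Hypotheses (JJ : J *m J = - 1%:M) (G_unit : G \in unitmx).

(* [s^2 + t^2] kills [x], and [-1] is not a square in a real field. *)
Lemma J_free (x : 'cV[R]_n) (s t : R) :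
  x != 0 -> s *: x + t *: (J *m x) = 0 -> s = 0.
Proof.
move=> x0 st0.
have ts0 : s *: (J *m x) - t *: x = 0.
  have := congr1 (mulmx J) st0.
  by rewrite mulmx0 mulmxDr -!scalemxAr mulmxJJ // scalerN.
have : (s * s + t * t) *: x = 0.
  have -> : (s * s + t * t) *: x =
      s *: (s *: x + t *: (J *m x)) - t *: (s *: (J *m x) - t *: x).
    rewrite scalerDr scalerBr !scalerA scalerDl opprB [t * s]mulrC.
    by rewrite addrA (addrAC ((s * s) *: x)) addrK.
  by rewrite st0 ts0 !scaler0 subr0.
move/eqP; rewrite scaler_eq0 (negbTE x0) orbF -!expr2 paddr_eq0 ?sqr_ge0 //.
by rewrite sqrf_eq0 => /andP[/eqP].
Qed.

Lemma hrank_eq0 x y : (hrank G J x y == 0) = (x == 0) || (y == 0).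
Proof.
apply/idP/idP; last first.
  by case/orP => /eqP->; rewrite ?hrank0l // /hrank mulmx0 !rank_one0r addr0.
have [->//|x0 /eqP xy0] := eqVneq x 0; apply/eqP.
suff yG0 : y^T *m G = 0.
  by apply: trmx_inj; rewrite trmx0 -(mulmxK G_unit y^T) yG0 mul0mx.
apply/rowP => i; rewrite [RHS]mxE.
apply: (@J_free x _ (((J *m y)^T *m G) 0 i) x0).
have := congr1 (fun M : 'M_n => M *m (delta_mx i 0 : 'cV_n)) xy0.
rewrite /= mul0mx /hrank /rank_one mulmxDl -[x *m _ *m _]mulmxA.
rewrite -[J *m x *m _ *m _]mulmxA -!colE.
rewrite [col i _]mx11_scalar [col i ((J *m y)^T *m G)]mx11_scalar.
by rewrite !mul_mx_scalar !mxE.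
Qed.

End RealComplexStructure.

Section HornerChain.

Variables (R : comNzRingType) (n : nat) (A : 'M[R]_n.+1) (l : R).

Lemma horner_mxMXaddC (q : {poly R}) c :
  horner_mx A (q * 'X + c%:P) = horner_mx A q *m A + c%:M.
Proof. by rewrite rmorphD rmorphM /= horner_mx_X horner_mx_C mulmxE. Qed.

Lemma horner_mx_eigen p (u : 'cV[R]_n.+1) :
  A *m u = l *: u -> horner_mx A p *m u = p.[l] *: u.
Proof.
move=> Au; elim/poly_ind: p => [|q c IHq].
  by rewrite rmorph0 mul0mx horner0 scale0r.
rewrite horner_mxMXaddC mulmxDl -mulmxA Au -scalemxAr IHq mul_scalar_mx.
by rewrite hornerMXaddC scalerA scalerDl mulrC.
Qed.

Lemma horner_mx_jordan p (u v : 'cV[R]_n.+1) :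
  A *m u = l *: u -> A *m v = l *: v + u ->
  horner_mx A p *m v = p.[l] *: v + (p^`()).[l] *: u.
Proof.
move=> Au Av; elim/poly_ind: p => [|q c IHq].
  by rewrite rmorph0 mul0mx deriv0 !horner0 !scale0r addr0.
rewrite horner_mxMXaddC mulmxDl -mulmxA Av mulmxDr -scalemxAr IHq.
rewrite horner_mx_eigen // mul_scalar_mx derivMXaddC hornerMXaddC hornerD hornerMX.
rewrite scalerDr !scalerA !scalerDl [l * _]mulrC [l * (q^`()).[l]]mulrC.
by rewrite addrAC -!addrA; congr (_ + _); rewrite addrC -addrA.
Qed.

End HornerChain.

Lemma eigenvalue_tr (F : fieldType) n (A : 'M[F]_n) a :
  eigenvalue A^T a = eigenvalue A a.
Proof.
rewrite /eigenvalue /eigenspace !kermx_eq0 !row_free_unit -unitmx_tr.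
by rewrite linearB /= tr_scalar_mx trmxK.
Qed.

Lemma eigenvalue_colP (F : fieldType) n (A : 'M[F]_n) a :
  eigenvalue A a -> exists2 u : 'cV_n, A *m u = a *: u & u != 0.
Proof.
rewrite -eigenvalue_tr => /eigenvalueP [r rA r0].
exists r^T; last by rewrite trmx_eq0.
by rewrite -[A]trmxK -trmx_mul rA linearZ.
Qed.

Lemma hermitian_endo_horner (R : realFieldType) n (G J A : 'M[R]_n.+1) p :
  hermitian_endo G J A -> hermitian_endo G J (horner_mx A p).
Proof.
case=> AG AJ; split; last exact: comm_horner_mx.
elim/poly_ind: p => [|q c IHq]; first by rewrite rmorph0 trmx0 mul0mx mulmx0.
rewrite horner_mxMXaddC linearD /= trmx_mul tr_scalar_mx mulmxDl mulmxDr.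
rewrite -mulmxA IHq mulmxA AG -!mulmxA (comm_horner_mx _ (erefl (A *m A))).
by rewrite scalar_mxC.
Qed.

Lemma in_u_linear (R : realFieldType) n (G J : 'M[R]_n) (a : R) X Y :
  in_u G J X -> in_u G J Y -> in_u G J (a *: X + Y).
Proof.
move=> [XJ XG] [YJ YG]; split.
  by rewrite mulmxDl mulmxDr -scalemxAl -scalemxAr XJ YJ.
rewrite linearD linearZ /= mulmxDl mulmxDr -scalemxAl -scalemxAr XG YG.
by rewrite scalerN opprD.
Qed.

Section CentralizerReduction.

Variables (R : realFieldType) (n : nat) (G J A : 'M[R]_n.+1) (p : {poly R})
  (R0 : 'M[R]_n.+1 -> 'M[R]_n.+1).
Hypotheses (R0_u : forall X, in_u G J X -> in_u G J (R0 X))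
  (R0_linear : forall (a : R) X Y, in_u G J X -> in_u G J Y ->
     R0 (a *: X + Y) = a *: R0 X + R0 Y)
  (R0_commx : forall X, in_u G J X -> commx (R0 X) A = commx X (horner_mx A p)).

Definition u_centralizer_eqs (X : 'M[R]_n.+1) :=
  (X *m J - J *m X, X^T *m G + G *m X, commx X A).

Lemma u_centralizer_eqs_linear : linear u_centralizer_eqs.
Proof.
move=> a X Y; rewrite /u_centralizer_eqs /commx /=; congr (_, _, _).
- by rewrite mulmxDl mulmxDr -scalemxAl -scalemxAr opprD addrACA -scalerBr.
- rewrite linearD linearZ /= mulmxDl mulmxDr -scalemxAl -scalemxAr.
  by rewrite addrACA scalerDr.
- by rewrite mulmxDl mulmxDr -scalemxAl -scalemxAr opprD addrACA -scalerBr.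
Qed.

Definition u_centralizer : {vspace 'M[R]_n.+1} := lker (linfun u_centralizer_eqs).

Lemma mem_u_centralizer X : X \in u_centralizer <-> in_u G J X /\ commx X A = 0.
Proof.
rewrite memv_ker (linfun_linearE u_centralizer_eqs_linear) /u_centralizer_eqs.
split => [/eqP [/eqP] | [[XJ XG] XA]]; last by rewrite XJ XG XA subrr addNr.
by rewrite subr_eq0 => /eqP XJ /eqP; rewrite addr_eq0 => /eqP XG XA.
Qed.

Lemma u_eigenvalue_of_commutator X0 mu :
  in_u G J X0 -> commx X0 A != 0 ->
  commx X0 (horner_mx A p) = mu *: commx X0 A -> u_eigenvalue G J R0 mu.
Proof.
move=> X0u X0A0 X0B.
have Cu X : X \in u_centralizer -> in_u G J X by case/mem_u_centralizer.
have R0C : {in u_centralizer, forall X, R0 X \in u_centralizer}.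
  move=> X /mem_u_centralizer [Xu /eqP]; rewrite subr_eq0 => /eqP XA.
  apply/mem_u_centralizer; split; first exact: R0_u.
  by rewrite R0_commx // /commx (comm_horner_mx p (esym XA)) subrr.
have R0Clin a : {in u_centralizer &,
    forall X Y, R0 (a *: X + Y) = a *: R0 X + R0 Y}.
  by move=> X Y /Cu Xu /Cu Yu; apply: R0_linear.
have ZC : R0 X0 - mu *: X0 \in u_centralizer.
  apply/mem_u_centralizer; split.
    by rewrite addrC -scaleNr; apply: in_u_linear => //; apply: R0_u.
  by rewrite commxB commxZ R0_commx // X0B subrr.
case: (stable_eigenvector_or_onto R0C R0Clin mu ZC) => [[w /Cu wu [w0 Rw]]|].
  by exists w.
case=> w /mem_u_centralizer [wu wA] Rw; exists (X0 - w); split.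
- by rewrite addrC -scaleN1r; apply: in_u_linear.
- by apply: contraNneq X0A0 => /eqP; rewrite subr_eq0 => /eqP->; rewrite wA.
- rewrite addrC -scaleN1r R0_linear // scaleN1r -[R0 X0](subrK (mu *: X0)) -Rw.
  by rewrite scaleN1r -addrA addKr scalerDr scalerN.
Qed.

Hypotheses (GJ_ph : pseudo_hermitian G J) (A_herm : hermitian_endo G J A).

Lemma u_eigenvalue_divided_difference li lj :
  eigenvalue A li -> eigenvalue A lj -> li != lj ->
  u_eigenvalue G J R0 ((p.[li] - p.[lj]) / (li - lj)).
Proof.
move=> /eigenvalue_colP [a Aa a0] /eigenvalue_colP [b Ab b0] lij.
have [JJ _ G_unit _] := GJ_ph.
have [AG AJ] := A_herm; have [BG BJ] := hermitian_endo_horner p A_herm.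
have Ba := horner_mx_eigen p Aa; have Bb := horner_mx_eigen p Ab.
have hsym_ab : hsym G J a b != 0.
  have NJ : (A - lj%:M) *m J = J *m (A - lj%:M).
    by rewrite mulmxBl mulmxBr AJ scalar_mxC.
  apply/eqP => hsym0; have := congr1 (mulmx (A - lj%:M)) hsym0.
  rewrite mulmx0 mulmx_hsym // !mulmxBl Aa Ab !mul_scalar_mx -!scalerBl subrr.
  rewrite scale0r hrank0l addr0 hrankZl => /eqP.
  by rewrite scaler_eq0 subr_eq0 (negbTE lij) hrank_eq0 // (negbTE a0) (negbTE b0).
apply: (u_eigenvalue_of_commutator (hwedge_in_u a b GJ_ph)).
  by rewrite (commx_hwedge_eigen AG AJ Aa Ab) scaler_eq0 subr_eq0 eq_sym negb_or lij.
rewrite (commx_hwedge_eigen BG BJ Ba Bb) (commx_hwedge_eigen AG AJ Aa Ab) scalerA.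
by rewrite -[lj - li]opprB mulrN divfK ?subr_eq0 // opprB.
Qed.

Lemma u_eigenvalue_derivative l :
  nontrivial_jordan_block A l -> u_eigenvalue G J R0 (p^`()).[l].
Proof.
case=> v []; set u := (A - l%:M) *m v => Nu u0.
have [JJ _ G_unit _] := GJ_ph.
have [AG AJ] := A_herm; have [BG BJ] := hermitian_endo_horner p A_herm.
have Au : A *m u = l *: u.
  by apply/eqP; rewrite -subr_eq0 -mul_scalar_mx -mulmxBl Nu.
have Av : A *m v = l *: v + 1 *: u.
  by rewrite scale1r /u mulmxBl mul_scalar_mx addrC subrK.
have Bu := horner_mx_eigen p Au.
have Bv : horner_mx A p *m v = p.[l] *: v + (p^`()).[l] *: u.
  by apply: horner_mx_jordan; rewrite // Av scale1r.
have hsym_uu : hsym G J u u != 0.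
  by rewrite /hsym -mulr2n -scaler_nat scaler_eq0 pnatr_eq0 hrank_eq0 // orbb.
apply: (u_eigenvalue_of_commutator (hwedge_in_u u v GJ_ph)).
  by rewrite (commx_hwedge_jordan AG AJ Au Av) scale1r.
rewrite (commx_hwedge_jordan BG BJ Bu Bv) (commx_hwedge_jordan AG AJ Au Av).
by rewrite scale1r.
Qed.

End CentralizerReduction.

Theorem propositionA3 (R : realFieldType) (n : nat) (G J A : 'M[R]_n.+1)
  (p : {poly R}) (R0 : 'M[R]_n.+1 -> 'M[R]_n.+1) :
  pseudo_hermitian G J ->
  hermitian_endo G J A ->
  (forall X, in_u G J X -> in_u G J (R0 X)) ->
  (forall (a : R) X Y, in_u G J X -> in_u G J Y ->
     R0 (a *: X + Y) = a *: R0 X + R0 Y) ->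
  (forall X, in_u G J X -> commx (R0 X) A = commx X (horner_mx A p)) ->
  (forall li lj : R, eigenvalue A li -> eigenvalue A lj -> li != lj ->
     u_eigenvalue G J R0 ((p.[li] - p.[lj]) / (li - lj)))
  /\
  (forall li : R, eigenvalue A li -> nontrivial_jordan_block A li ->
     u_eigenvalue G J R0 (p^`()).[li]).
Proof.
move=> GJ_ph A_herm R0_u R0_linear R0_commx; split.
  exact: u_eigenvalue_divided_difference R0_u R0_linear R0_commx GJ_ph A_herm.
move=> li _; exact: u_eigenvalue_derivative R0_u R0_linear R0_commx GJ_ph A_herm li.
Qed.
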